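(* Let $\Gamma=([n],E)$ be a simple graph, $k\ge1$ an integer, and $\mathsf{P}$ an $\mathcal{H}$-poset of the hypergraph $\mathsf{H}_k(\Gamma)$ which is not an $\mathcal{H}$-poset of $\mathsf{H}_{k+1}(\Gamma)$. Then there is an $\mathcal{H}$-poset $\mathsf{P}'$ of $\mathsf{H}_{k+1}(\Gamma)$ obtained from $\mathsf{P}$ by adding relations, i.e. $i<_{\mathsf{P}}j$ implies $i<_{\mathsf{P}'}j$ for all $i,j\in[n]$.
   Context: $\mathsf{H}_m(\Gamma)=\{S\subseteq[n]:S\neq\emptyset,\ |S|\le m+1,\ \Gamma|_S\text{ connected}\}$. A poset $\mathsf{P}$ on $[n]$ is an $\mathcal{H}$-poset of a hypergraph $\mathsf{H}$ (a set of nonempty subsets of $[n]$) if (1) for every $H\in\mathsf{H}$ the Hasse diagram of the induced subposet $\mathsf{P}|_H$ is a rooted tree (as an undirected graph it is a tree, and $\mathsf{P}|_H$ has a unique maximal element); and (2) whenever $i\lessdot_{\mathsf{P}}j$ ($i<_{\mathsf{P}}j$ with no $k$ strictly between), there exists $H\in\mathsf{H}$ with $\{i,j\}\subseteq H$. *)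

From mathcomp Require Import all_boot.
Set Implicit Arguments. Unset Strict Implicit. Unset Printing Implicit Defensive.

Definition simple_graph (n : nat) (g : rel 'I_n) : Prop :=
  symmetric g /\ irreflexive g.

Definition restrict_rel (n : nat) (e : rel 'I_n) (S : {set 'I_n}) : rel 'I_n :=
  fun a b => [&& a \in S, b \in S & e a b].

Definition connected_on (n : nat) (e : rel 'I_n) (S : {set 'I_n}) : bool :=
  (0 < #|S|) && [forall x in S, forall y in S, connect (restrict_rel e S) x y].

Definition Hm (n : nat) (g : rel 'I_n) (m : nat) (S : {set 'I_n}) : bool :=
  [&& 0 < #|S|, #|S| <= m.+1 & connected_on g S].

Definition strict_order (n : nat) (lt : rel 'I_n) : Prop :=
  irreflexive lt /\ transitive lt.

Definition covers_in (n : nat) (lt : rel 'I_n) (H : {set 'I_n}) (i j : 'I_n) : bool :=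
  [&& i \in H, j \in H, lt i j & ~~ [exists k in H, lt i k && lt k j]].

Definition covers (n : nat) (lt : rel 'I_n) (i j : 'I_n) : bool :=
  covers_in lt [set: 'I_n] i j.

Definition hasse_edge (n : nat) (lt : rel 'I_n) (H : {set 'I_n}) : rel 'I_n :=
  fun i j => covers_in lt H i j || covers_in lt H j i.

Definition has_cycle_on (n : nat) (e : rel 'I_n) (S : {set 'I_n}) : Prop :=
  exists (x : 'I_n) (p : seq 'I_n),
    [/\ 2 <= size p, uniq (x :: p), path (restrict_rel e S) x p
      & restrict_rel e S (last x p) x].

Definition is_tree_on (n : nat) (e : rel 'I_n) (S : {set 'I_n}) : Prop :=
  connected_on e S /\ ~ has_cycle_on e S.

Definition unique_max_in (n : nat) (lt : rel 'I_n) (H : {set 'I_n}) : Prop :=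
  exists! x : 'I_n, x \in H /\ forall y, y \in H -> ~~ lt x y.

Definition H_poset (n : nat) (hg : {set 'I_n} -> bool) (lt : rel 'I_n) : Prop :=
  (forall H, hg H -> is_tree_on (hasse_edge lt H) H /\ unique_max_in lt H) /\
  (forall i j, covers lt i j -> exists H, hg H /\ i \in H /\ j \in H).

From mathcomp Require Import all_boot zify.
Set Implicit Arguments. Unset Strict Implicit. Unset Printing Implicit Defensive.

(* Fix a linear extension [key] of P and let P' be the transitive closure of the
   relation "key i < key j and i, j lie in a common hyperedge of H_(k+1)".  P' is
   contained in the key order and agrees with it on every hyperedge, so on each
   hyperedge it is a chain, whose Hasse diagram is a path with a unique top; a
   covering pair of P' is a single step of the generating relation, hence lies in a
   hyperedge.  P is the transitive closure of its covering pairs, each of which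
   lies in a hyperedge of H_k, hence of H_(k+1), so P' extends P. *)

Section AgreeOn.
Variables (n : nat) (lt lt' : rel 'I_n) (H : {set 'I_n}).
Hypothesis eq_lt : {in H &, lt =2 lt'}.

Lemma eq_in_covers_in : covers_in lt H =2 covers_in lt' H.
Proof.
move=> i j; rewrite /covers_in.
case iH: (i \in H); case jH: (j \in H) => //=.
rewrite eq_lt //; congr (_ && ~~ _); apply: eq_existsb => m.
by case mH: (m \in H); rewrite //= !eq_lt.
Qed.

Lemma eq_in_hasse_edge : hasse_edge lt H =2 hasse_edge lt' H.
Proof. by move=> i j; rewrite /hasse_edge !eq_in_covers_in. Qed.

Lemma eq_in_unique_max_in : unique_max_in lt H -> unique_max_in lt' H.
Proof.
have maxE x :
  x \in H -> (forall y, y \in H -> ~~ lt x y) <-> (forall y, y \in H -> ~~ lt' x y).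
  by move=> xH; split=> xmax y yH; [rewrite -eq_lt | rewrite eq_lt] => //; apply: xmax.
move=> [z [[zH /(maxE z zH) zmax] zuniq]]; exists z; split=> // x [xH /(maxE x xH) xmax].
exact: zuniq.
Qed.
End AgreeOn.

Lemma eq_is_tree_on n (e e' : rel 'I_n) (S : {set 'I_n}) :
  e =2 e' -> is_tree_on e S -> is_tree_on e' S.
Proof.
move=> ee'; have eqr : restrict_rel e S =2 restrict_rel e' S.
  by move=> a b; rewrite /restrict_rel ee'.
move=> [/andP [S0 /forall_inP conn] acyc]; split.
  rewrite /connected_on S0; apply/forall_inP => x xS; apply/forall_inP => y yS.
  by rewrite -(eq_connect eqr); move/forall_inP: (conn x xS); apply.
move=> [x [p [sz_p uniq_p path_p last_p]]]; apply: acyc; exists x, p.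
by rewrite (eq_path eqr) eqr.
Qed.

Section Chain.
Variables (n : nat) (key : 'I_n -> nat) (S : {set 'I_n}).
Hypothesis key_inj : injective key.
Let ltk : rel 'I_n := fun i j => key i < key j.
Let hasse := restrict_rel (hasse_edge ltk S) S.

Lemma chain_max : 0 < #|S| -> exists2 z, z \in S & forall y, y \in S -> key y <= key z.
Proof.
case/card_gt0P=> x0 x0S.
by have [z] := @arg_maxnP _ x0 (fun y => y \in S) key x0S; exists z.
Qed.

Lemma key_lt_max (A : {pred 'I_n}) z y :
  (forall x, x \in A -> key x <= key z) -> y \in A -> y != z ->
  key y < key z.
Proof.
move=> zmax yA yz; rewrite ltn_neqAle zmax // andbT.
by apply: contra yz => /eqP/key_inj->.
Qed.

Lemma chain_succ_cover x z : x \in S -> z \in S -> key x < key z ->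
  exists2 y, covers_in ltk S x y & key y <= key z.
Proof.
move=> xS zS xz; have zA : z \in [set y in S | key x < key y] by rewrite inE zS.
have [y] := @arg_minnP _ z (fun y => y \in [set y in S | key x < key y]) key zA.
rewrite inE => /andP [yS xy] ymin.
exists y; last by have := ymin z zA.
rewrite /covers_in xS yS /ltk xy /=; apply/existsP=> -[w /and3P [wS xw wy]].
by have := ymin w; rewrite inE wS xw => /(_ isT); rewrite leqNgt wy.
Qed.

Lemma hasse_sym : symmetric hasse.
Proof. by move=> a b; rewrite /hasse /restrict_rel /hasse_edge orbC andbCA. Qed.

Lemma chain_connected : 0 < #|S| -> connected_on (hasse_edge ltk S) S.
Proof.
move=> S0; have [z zS zmax] := chain_max S0.
have to_max x : x \in S -> connect hasse x z.
  elim: {x}(key z - key x) {-2}x (leqnn (key z - key x)) => [|d IH] x dx xS.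
    suff -> : x = z by apply: connect0.
    by apply: key_inj; have := zmax x xS; lia.
  have [->|xz] := eqVneq x z; first exact: connect0.
  have {}xz : key x < key z by apply: (key_lt_max zmax).
  have [y xy yz] := chain_succ_cover xS zS xz.
  have yS : y \in S by case/and4P: xy.
  have hxy : hasse x y by rewrite /hasse /restrict_rel xS yS /hasse_edge xy.
  apply: connect_trans (connect1 hxy) (IH y _ yS).
  by move: xy => /and4P [_ _ /= + _]; rewrite /ltk; lia.
rewrite /connected_on S0; apply/forall_inP => x xS; apply/forall_inP => y yS.
by apply: connect_trans (to_max x xS) _; rewrite (sym_connect_sym hasse_sym) to_max.
Qed.

Lemma hasse_edge_below a z : key a < key z -> hasse_edge ltk S a z -> covers_in ltk S a z.
Proof.
move=> az; rewrite /hasse_edge => /orP [//|/and4P [_ _ za _]].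
by move: za; rewrite /ltk ltnNge ltnW.
Qed.

Lemma lower_cover_unique a b z : covers_in ltk S a z -> covers_in ltk S b z -> a = b.
Proof.
move=> /and4P [aS _ az /existsP a_cov] /and4P [bS _ bz /existsP b_cov].
have [kab|kab|/key_inj //] := ltngtP (key a) (key b).
- by case: a_cov; exists b; rewrite bS /ltk kab.
- by case: b_cov; exists a; rewrite aS /ltk kab.
Qed.

(* The top z of a cycle has two distinct neighbours on it; both are lower covers
   of z, but a lower cover in a chain is unique. *)
Lemma chain_acyclic : ~ has_cycle_on (hasse_edge ltk S) S.
Proof.
move=> [x [p [sz_p uniq_c path_p last_p]]].
have [z zc zmax] := @arg_maxnP _ x (fun y => y \in x :: p) key (mem_head x p).
have [i [|a [|d q]] rot_c] := rot_to zc.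
- by move: (size_rot i (x :: p)); rewrite rot_c /=; lia.
- by move: (size_rot i (x :: p)); rewrite rot_c /=; lia.
have : cycle hasse (z :: a :: d :: q) /\ uniq (z :: a :: d :: q).
  by rewrite -rot_c rot_cycle rot_uniq /= rcons_path path_p; split; [exact: last_p|].
set b := last d q; rewrite /= rcons_path -/b.
move=> -[/and4P [h_za _ _ h_bz] /and3P [z_notin a_notin _]].
have below_z y : y \in a :: d :: q -> key y < key z.
  move=> yc; apply: (key_lt_max zmax); last by apply: contraNneq z_notin => <-.
  by rewrite -(mem_rot i) rot_c inE yc orbT.
have bq : b \in d :: q by apply: mem_last.
have cover_az : covers_in ltk S a z.
  apply: hasse_edge_below; first exact: below_z (mem_head a _).
  by case/and3P: h_za; rewrite /hasse_edge orbC.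
have cover_bz : covers_in ltk S b z.
  apply: hasse_edge_below; first by apply: below_z; rewrite inE bq orbT.
  by case/and3P: h_bz.
have ab := lower_cover_unique cover_az cover_bz.
by move: bq; rewrite -ab (negbTE a_notin).
Qed.

Lemma chain_unique_max : 0 < #|S| -> unique_max_in ltk S.
Proof.
move=> S0; have [z zS zmax] := chain_max S0.
exists z; split=> [|x [xS xmax]].
  by split=> // y yS; rewrite /ltk -leqNgt zmax.
by apply: key_inj; apply/eqP; rewrite eqn_leq zmax //= leqNgt xmax.
Qed.

Lemma chain_H_tree : 0 < #|S| -> is_tree_on (hasse_edge ltk S) S /\ unique_max_in ltk S.
Proof.
move=> S0; split; last exact: chain_unique_max.
by split; [apply: chain_connected | apply: chain_acyclic].
Qed.
End Chain.

Section TransitiveClosure.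
Variable T : finType.
Implicit Types R : rel T.

Definition tclosure R : rel T := fun i j => [exists m, R i m && connect R m j].

Lemma tclosure_step R i j : R i j -> tclosure R i j.
Proof. by move=> Rij; apply/existsP; exists j; rewrite Rij connect0. Qed.

Lemma tclosure_trans R : transitive (tclosure R).
Proof.
move=> j i l /existsP [m /andP [Rim mj]] /existsP [m' /andP [Rjm' m'l]].
apply/existsP; exists m; rewrite Rim (connect_trans mj) //.
exact: connect_trans (connect1 Rjm') m'l.
Qed.

Lemma connect_tclosure R i j : connect R i j -> i != j -> tclosure R i j.
Proof.
move=> /connectP [[|m p] /= path_p ->]; first by rewrite eqxx.
case/andP: path_p => Rim path_p _; apply/existsP; exists m.
by rewrite Rim; apply/connectP; exists p.
Qed.

Lemma sub_tclosure R R' : subrel R R' -> subrel (tclosure R) (tclosure R').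
Proof.
move=> RR' i j /existsP [m /andP [Rim mj]]; apply/existsP; exists m.
by rewrite RR' //= (connect_sub _ mj) // => x y /RR' /connect1.
Qed.

Lemma tclosure_key_lt R (key : T -> nat) :
  (forall i j, R i j -> key i < key j) -> forall i j, tclosure R i j -> key i < key j.
Proof.
move=> R_lt i j /existsP [m /andP [/R_lt im /connectP [p path_p ->]]].
elim: p m im path_p => [|y p IH] m im //= /andP [/R_lt my path_p].
exact: IH (ltn_trans im my) path_p.
Qed.
End TransitiveClosure.

Lemma covers_tclosure n (R : rel 'I_n) i j : covers (tclosure R) i j -> R i j.
Proof.
move=> /and4P [_ _ /existsP [m /andP [Rim mj]] /existsP no_mid].
have [<-//|mj'] := eqVneq m j; case: no_mid; exists m.
by rewrite in_setT tclosure_step // connect_tclosure.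
Qed.

Lemma strict_order_tclosure_covers n (P : rel 'I_n) :
  strict_order P -> subrel P (tclosure (covers P)).
Proof.
move=> [Pirr Ptr]; pose between i j := [set m | P i m && P m j].
suff ind d i j : #|between i j| <= d -> P i j -> tclosure (covers P) i j.
  by move=> i j; apply: ind (leqnn _).
elim: d i j => [|d IH] i j d_ij Pij.
  apply: tclosure_step; rewrite /covers /covers_in !in_setT Pij.
  apply/existsP=> -[m /andP [_ mid]].
  by move: d_ij; rewrite leqn0 => /eqP/card0_eq/(_ m); rewrite inE mid.
have [no_mid|[m]] := set_0Vmem (between i j).
  by apply: IH; rewrite // no_mid cards0.
rewrite inE => /andP [Pim Pmj].
have lt_im : #|between i m| < #|between i j|.
  apply/proper_card/properP; split; last by exists m; rewrite !inE ?Pim ?Pmj ?Pirr ?andbF.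
  by apply/subsetP=> x; rewrite !inE => /andP [-> /Ptr ->].
have lt_mj : #|between m j| < #|between i j|.
  apply/proper_card/properP; split; last by exists m; rewrite !inE ?Pim ?Pmj ?Pirr.
  by apply/subsetP=> x; rewrite !inE => /andP [/(Ptr _ _ _ Pim) -> ->].
by apply: (@tclosure_trans _ _ m); apply: IH; rewrite // -ltnS (leq_trans _ d_ij).
Qed.

Section LinearExtension.
Variables (n : nat) (P : rel 'I_n).

Definition linext_key (i : 'I_n) : nat := #|[set x | P x i]| * n + i.

Lemma linext_key_inj : injective linext_key.
Proof.
move=> i j /(congr1 (modn^~ n)); rewrite /linext_key !modnMDl !modn_small //.
exact: val_inj.
Qed.

Lemma linext_key_mono :
  strict_order P -> forall i j, P i j -> linext_key i < linext_key j.
Proof.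
move=> [Pirr Ptr] i j Pij.
have : #|[set x | P x i]| < #|[set x | P x j]|.
  apply/proper_card/properP; split; last by exists i; rewrite !inE ?Pij ?Pirr.
  by apply/subsetP=> x; rewrite !inE => /Ptr; apply.
by rewrite /linext_key => lt_ij; have := ltn_ord i; nia.
Qed.
End LinearExtension.

Section HPosetExtension.
Variables (n : nat) (hg : {set 'I_n} -> bool) (key : 'I_n -> nat).
Hypothesis hg_nonempty : forall S, hg S -> 0 < #|S|.
Hypothesis key_inj : injective key.

Definition hg_step : rel 'I_n :=
  fun i j => (key i < key j) && [exists S, [&& hg S, i \in S & j \in S]].

Lemma hg_closure_key_lt i j : tclosure hg_step i j -> key i < key j.
Proof. by apply: tclosure_key_lt => {}i {}j /andP []. Qed.

Lemma hg_closure_strict : strict_order (tclosure hg_step).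
Proof.
split; last exact: tclosure_trans.
by move=> i; apply/negbTE/negP => /hg_closure_key_lt; rewrite ltnn.
Qed.

Lemma hg_closure_on_edge S :
  hg S -> {in S &, tclosure hg_step =2 (fun i j => key i < key j)}.
Proof.
move=> hgS i j iS jS; apply/idP/idP => [/hg_closure_key_lt //|ij].
by apply: tclosure_step; rewrite /hg_step ij; apply/existsP; exists S; rewrite hgS iS jS.
Qed.

Lemma hg_closure_H_poset : H_poset hg (tclosure hg_step).
Proof.
split=> [S hgS | i j /covers_tclosure /andP [_ /existsP [S /and3P [hgS iS jS]]]];
  last by exists S.
have agree := hg_closure_on_edge hgS.
have [tree max] := chain_H_tree key_inj (hg_nonempty hgS).
split; last by apply: eq_in_unique_max_in max => x y xS yS; rewrite agree.
by apply: eq_is_tree_on tree => x y; rewrite (eq_in_hasse_edge agree).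
Qed.

Lemma hg_closure_extends (P : rel 'I_n) :
  strict_order P -> (forall i j, P i j -> key i < key j) ->
  (forall i j, covers P i j -> exists S, hg S /\ i \in S /\ j \in S) ->
  subrel P (tclosure hg_step).
Proof.
move=> P_strict P_key P_covers i j /(strict_order_tclosure_covers P_strict).
apply: sub_tclosure => {}i {}j cov_ij; have [S [hgS [iS jS]]] := P_covers i j cov_ij.
rewrite /hg_step P_key; last by case/and4P: cov_ij.
by apply/existsP; exists S; rewrite hgS iS jS.
Qed.
End HPosetExtension.

Lemma Hm_mono n (g : rel 'I_n) m m' S : m <= m' -> Hm g m S -> Hm g m' S.
Proof. by move=> mm' /and3P [S0 Sm conn]; rewrite /Hm S0 conn (leq_trans Sm). Qed.

Theorem mainTheorem10 (n : nat) (g : rel 'I_n) (k : nat) (P : rel 'I_n) :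
  simple_graph g -> 1 <= k ->
  strict_order P ->
  H_poset (Hm g k) P -> ~ H_poset (Hm g k.+1) P ->
  exists P' : rel 'I_n,
    [/\ strict_order P', H_poset (Hm g k.+1) P'
      & forall i j, P i j -> P' i j].
Proof.
move=> _ _ P_strict [_ P_covers] _.
have Hm_nonempty S : Hm g k.+1 S -> 0 < #|S| by case/and3P.
exists (tclosure (hg_step (Hm g k.+1) (linext_key P))); split.
- exact: hg_closure_strict.
- exact: hg_closure_H_poset Hm_nonempty (linext_key_inj (P := P)).
- apply: hg_closure_extends P_strict (linext_key_mono P_strict) _.
  move=> i j /P_covers [S [HS ijS]]; exists S; split=> //.
  exact: Hm_mono HS.
Qed.
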